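(* Let $\mathcal{P}$ be a partition of $\{1,\dots,n\}$ and $\mathcal{U}$ a subspace of $\mathbb{R}^n$. If $\mu_{\mathcal{P}}(\mathcal{U})<1/2$ then $\mathcal{U}$ is $\mathcal{P}$-realizable.
   Context: $P_{\mathcal{U}}$ is the orthogonal projector onto $\mathcal{U}$. For $\mathcal{I}\subseteq\{1,\dots,n\}$, $S^{\mathcal{I}}=\{x\in\mathbb{R}^n:\|x\|_2=1,\ x_j=0\text{ for }j\notin\mathcal{I}\}$. The $\mathcal{P}$-coherence is $\mu_{\mathcal{P}}(\mathcal{U})=\max_{\mathcal{I}\in\mathcal{P}}\max_{x\in S^{\mathcal{I}}}\|P_{\mathcal{U}}x\|_2^2$. $\mathcal{E}_{\mathcal{P}}=\{Y\succeq0: Y_{\mathcal{I}}=I\text{ for all }\mathcal{I}\in\mathcal{P}\}$ ($Y_{\mathcal{I}}$ the principal submatrix indexed by $\mathcal{I}$); $\mathcal{U}$ is $\mathcal{P}$-realizable if some $Y\in\mathcal{E}_{\mathcal{P}}$ has nullspace containing $\mathcal{U}$. *)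

From HB Require Import structures.
From mathcomp Require Import all_boot all_order all_algebra.
From mathcomp Require Import boolp classical_sets reals.
Set Implicit Arguments. Unset Strict Implicit. Unset Printing Implicit Defensive.
Import Order.TTheory GRing.Theory Num.Theory.
Local Open Scope ring_scope.

Section Defs.
Variables (R : realType) (n : nat).

(* Vectors of R^n are row vectors 'rV[R]_n; a subspace U of R^n is the row
   space of a matrix U : 'M[R]_n (every subspace arises this way). *)

Definition sqnorm (v : 'rV[R]_n) : R := \sum_i (v 0 i) ^+ 2.

Definition dotv (u v : 'rV[R]_n) : R := \sum_i u 0 i * v 0 i.

Definition orthproj (U : 'M[R]_n) (x : 'rV[R]_n) : 'rV[R]_n :=
  xget 0 [set p : 'rV[R]_n | (p <= U)%MS /\
            forall u : 'rV[R]_n, (u <= U)%MS -> dotv (x - p) u = 0].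

Definition unit_supp (I : {set 'I_n}) (x : 'rV[R]_n) : Prop :=
  sqnorm x = 1 /\ forall j : 'I_n, j \notin I -> x 0 j = 0.

(* P-coherence mu_P(U) = max_{I in P} max_{x in S^I} ||P_U x||_2^2
   (written as a supremum; the maximum is attained by compactness) *)
Definition coherence (P : {set {set 'I_n}}) (U : 'M[R]_n) : R :=
  sup [set r : R | exists I : {set 'I_n}, I \in P /\
         exists x : 'rV[R]_n, unit_supp I x /\ r = sqnorm (orthproj U x)].

Definition psd (Y : 'M[R]_n) : Prop :=
  Y^T = Y /\ forall x : 'rV[R]_n, 0 <= (x *m Y *m x^T) 0 0.

Definition in_EP (P : {set {set 'I_n}}) (Y : 'M[R]_n) : Prop :=
  psd Y /\ forall I : {set 'I_n}, I \in P ->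
    forall i j : 'I_n, i \in I -> j \in I -> Y i j = (i == j)%:R.

Definition realizable (P : {set {set 'I_n}}) (U : 'M[R]_n) : Prop :=
  exists Y : 'M[R]_n, in_EP P Y /\
    forall u : 'rV[R]_n, (u <= U)%MS -> Y *m u^T = 0.

End Defs.

From HB Require Import structures.
From mathcomp Require Import all_boot all_order all_algebra.
From mathcomp Require Import boolp classical_sets reals.
From mathcomp Require Import ring lra.
Import Order.TTheory GRing.Theory Num.Theory.
Local Open Scope ring_scope.
Set Implicit Arguments. Unset Strict Implicit. Unset Printing Implicit Defensive.

(* Let Q be the orthogonal projector onto U, Qc = 1 - Q, and let bdiag keep the
   diagonal blocks of a matrix with respect to P.  We look for Y = Qc B Qc with B
   symmetric, block diagonal and positive semidefinite: such a Y is psd, kills U,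
   and lies in E_P as soon as bdiag (Qc B Qc) = 1.
   For block-diagonal Z and y = x bdiag(Qc), the quadratic form of bdiag (Qc Z Qc)
   at x is that of Z at y plus the cross terms Z(x_I Q P_J), I <> J.  The bound
   mu < 1/2 gives bdiag(Qc) >= 1 - mu and bounds the total mass of the cross terms
   by mu (1 - mu) |x|^2.  Comparing the extreme Rayleigh quotients of Z, the ratio
   mu / (1 - mu) < 1 forces Z >= 0 whenever bdiag (Qc Z Qc) = c with c >= 0.  For
   c = 0, applied to Z and -Z, this makes B |-> bdiag (Qc B Qc) injective on
   symmetric block-diagonal matrices, hence onto; the preimage of 1 is psd by the
   case c = 1. *)

Section Euclid.
Variables (R : realType) (n : nat).
Implicit Types (u v w : 'rV[R]_n) (M : 'M[R]_n).

Lemma dotv_mx u v : dotv u v = (u *m v^T) 0 0.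
Proof. by rewrite [RHS]mxE; apply: eq_bigr => k _; rewrite mxE. Qed.

Lemma dotvC u v : dotv u v = dotv v u.
Proof. by apply: eq_bigr => k _; rewrite mulrC. Qed.

Lemma dotvDl u v w : dotv (u + v) w = dotv u w + dotv v w.
Proof. by rewrite -big_split; apply: eq_bigr => k _; rewrite mxE mulrDl. Qed.

Lemma dotvZl a u w : dotv (a *: u) w = a * dotv u w.
Proof. by rewrite mulr_sumr; apply: eq_bigr => k _; rewrite mxE mulrA. Qed.

Lemma dotvNl u w : dotv (- u) w = - dotv u w.
Proof. by rewrite -scaleN1r dotvZl mulN1r. Qed.

Lemma dotvBl u v w : dotv (u - v) w = dotv u w - dotv v w.
Proof. by rewrite dotvDl dotvNl. Qed.

Lemma dotvDr u v w : dotv w (u + v) = dotv w u + dotv w v.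
Proof. by rewrite dotvC dotvDl !(dotvC w). Qed.

Lemma dotvZr a u w : dotv w (a *: u) = a * dotv w u.
Proof. by rewrite dotvC dotvZl dotvC. Qed.

Lemma dotvBr u v w : dotv w (u - v) = dotv w u - dotv w v.
Proof. by rewrite !(dotvC w) dotvBl. Qed.

Lemma sqnorm_dotv v : sqnorm v = dotv v v.
Proof. by apply: eq_bigr => k _; rewrite expr2. Qed.

Lemma sqnorm_ge0 v : 0 <= sqnorm v.
Proof. by apply: sumr_ge0 => k _; rewrite sqr_ge0. Qed.

Lemma sqnorm_eq0 v : (sqnorm v == 0) = (v == 0).
Proof.
apply/idP/eqP => [|->]; last by rewrite /sqnorm big1 // => k _; rewrite mxE expr0n.
rewrite psumr_eq0 => [/allP v0|k _]; last exact: sqr_ge0.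
apply/rowP => k; rewrite mxE; apply/eqP.
by have /= := v0 k (mem_index_enum k); rewrite sqrf_eq0.
Qed.

Lemma sqnorm0 : sqnorm (0 : 'rV[R]_n) = 0.
Proof. by apply/eqP; rewrite sqnorm_eq0. Qed.

Lemma sqnormZ a v : sqnorm (a *: v) = a ^+ 2 * sqnorm v.
Proof. by rewrite !sqnorm_dotv dotvZl dotvZr mulrA expr2. Qed.

Lemma dotv_sqr_le u v : dotv u v ^+ 2 <= sqnorm u * sqnorm v.
Proof.
have := sqnorm_ge0 (sqnorm v *: u - dotv u v *: v).
rewrite !sqnorm_dotv !(dotvBl, dotvBr, dotvZl, dotvZr) (dotvC v u) -!sqnorm_dotv.
have := sqnorm_ge0 v; have := sqnorm_ge0 u.
set a := sqnorm u; set b := sqnorm v; set c := dotv u v => a0 b0 H.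
have [bz|bnz] := eqVneq b 0.
  have /eqP v0 : v == 0 by rewrite -sqnorm_eq0 -/b bz.
  rewrite bz mulr0 /c v0 /dotv big1 ?expr0n // => k _.
  by rewrite mxE mulr0.
have b_gt0 : 0 < b by rewrite lt_def bnz b0.
have : 0 <= b * (a * b - c ^+ 2) by nra.
by rewrite pmulr_rge0 // subr_ge0 mulrC.
Qed.

Definition qform M v : R := (v *m M *m v^T) 0 0.

Lemma qformE M v : qform M v = dotv (v *m M) v.
Proof. by rewrite dotv_mx. Qed.

Lemma qform_conj (A : 'M[R]_n) M v : qform (A *m M *m A^T) v = qform M (v *m A).
Proof. by rewrite /qform trmx_mul !mulmxA. Qed.

Lemma qform_scalar c v : qform c%:M v = c * sqnorm v.
Proof. by rewrite qformE mul_mx_scalar dotvZl sqnorm_dotv. Qed.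

Lemma qform1B M v : qform (1%:M - M) v = sqnorm v - qform M v.
Proof.
rewrite /qform mulmxBr mulmx1 mulmxBl sqnorm_dotv dotv_mx.
by rewrite [LHS]mxE [X in _ + X]mxE.
Qed.

Lemma qformN M v : qform (- M) v = - qform M v.
Proof. by rewrite /qform mulmxN mulNmx mxE. Qed.

Lemma qformNv M v : qform M (- v) = qform M v.
Proof. by rewrite /qform linearN /= mulmxN !mulNmx opprK. Qed.

Lemma qformZv M a v : qform M (a *: v) = a ^+ 2 * qform M v.
Proof. by rewrite !qformE -scalemxAl dotvZl dotvZr mulrA expr2. Qed.

Lemma qform_sym_idem M v : M^T = M -> M *m M = M -> qform M v = sqnorm (v *m M).
Proof.
move=> Msym Midem.
by rewrite sqnorm_dotv dotv_mx /qform trmx_mul Msym !mulmxA -(mulmxA v M M) Midem.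
Qed.

Lemma abs_qform_le M v : `|qform M v| <= (\sum_i \sum_j `|M i j|) * sqnorm v.
Proof.
have qform_sum : qform M v = \sum_i \sum_j v 0 i * M i j * v 0 j.
  by rewrite /qform mxE exchange_big; apply: eq_bigr => j _; rewrite !mxE mulr_suml.
have coord_le i : v 0 i ^+ 2 <= sqnorm v.
  by rewrite /sqnorm (bigD1 i) //= lerDl; apply: sumr_ge0 => k _; rewrite sqr_ge0.
rewrite qform_sum mulr_suml; apply: (le_trans (ler_norm_sum _ _ _)).
apply: ler_sum => i _; rewrite mulr_suml.
apply: (le_trans (ler_norm_sum _ _ _)); apply: ler_sum => j _.
have vij : `|v 0 i| * `|v 0 j| <= sqnorm v.
  have := coord_le i; have := coord_le j.
  rewrite -(real_normK (num_real (v 0 i))) -(real_normK (num_real (v 0 j))).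
  have := normr_ge0 (v 0 i); have := normr_ge0 (v 0 j).
  set p := `|v 0 i|; set q := `|v 0 j|; nra.
by rewrite !normrM mulrAC mulrC ler_wpM2l.
Qed.

Lemma sym_qform_eq0 M : M^T = M -> (forall v, qform M v = 0) -> M = 0.
Proof.
move=> Msym M0.
have polar u v : dotv (u *m M) v = 0.
  have := M0 (u + v); rewrite qformE mulmxDl !(dotvDl, dotvDr) -!qformE !M0.
  have -> : dotv (v *m M) u = dotv (u *m M) v.
    have e : u *m M *m v^T = (v *m M *m u^T)^T by rewrite !trmx_mul trmxK Msym mulmxA.
    by rewrite !dotv_mx e [in RHS]mxE.
  rewrite add0r addr0 -mulr2n -mulr_natr => /eqP.
  by rewrite mulf_eq0 pnatr_eq0 orbF => /eqP.
apply/row_matrixP => i; rewrite row0 rowE; apply/eqP.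
by rewrite -sqnorm_eq0 sqnorm_dotv polar.
Qed.

End Euclid.

Section GramProjection.
Variables (R : realType) (n m : nat) (B : 'M[R]_(m, n)).
Hypothesis Bfree : row_free B.
Implicit Types (u x : 'rV[R]_n).

Lemma gram_unit : B *m B^T \in unitmx.
Proof.
rewrite -row_free_unit; apply: inj_row_free => v vG.
have : sqnorm (v *m B) == 0.
  by rewrite sqnorm_dotv dotv_mx trmx_mul mulmxA -(mulmxA v) vG mul0mx mxE.
by rewrite sqnorm_eq0 mulmx_free_eq0 // => /eqP.
Qed.

Definition gram_proj : 'M[R]_n := B^T *m invmx (B *m B^T) *m B.
Local Notation Q := gram_proj.

Lemma gram_proj_sym : Q^T = Q.
Proof. by rewrite /Q !trmx_mul trmxK trmx_inv trmx_mul trmxK mulmxA. Qed.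

Lemma gram_proj_fix u : (u <= B)%MS -> u *m Q = u.
Proof.
by case/submxP => w ->; rewrite /Q !mulmxA -(mulmxA w) mulmxK // gram_unit.
Qed.

Lemma gram_proj_sub x : (x *m Q <= B)%MS.
Proof. by rewrite /Q mulmxA submxMl. Qed.

Lemma gram_proj_idem : Q *m Q = Q.
Proof.
apply/row_matrixP => i; rewrite row_mul.
by apply: gram_proj_fix; rewrite rowE gram_proj_sub.
Qed.

Lemma gram_proj_orth x u : (u <= B)%MS -> dotv (x - x *m Q) u = 0.
Proof.
case/submxP => w ->.
rewrite dotv_mx trmx_mul mulmxBl /Q -!mulmxA (mulmxA B) (mulmxA (invmx _)).
rewrite mulVmx ?gram_unit //.
by rewrite mul1mx subrr mxE.
Qed.

Lemma orthproj_gram (U : 'M[R]_n) x : (B :=: U)%MS -> orthproj U x = x *m Q.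
Proof.
move=> BU; apply: xget_unique.
  by split=> [|u]; rewrite -BU ?gram_proj_sub //; exact: gram_proj_orth.
move=> p []; rewrite -BU => pB p_orth.
have dB : (p - x *m Q <= B)%MS by rewrite addmx_sub ?eqmx_opp ?gram_proj_sub.
apply/eqP; rewrite -subr_eq0 -sqnorm_eq0 sqnorm_dotv.
have E : p - x *m Q = (x - x *m Q) - (x - p) by rewrite [RHS]addrC opprB addrA subrK.
by rewrite {1}E dotvBl gram_proj_orth // p_orth -?BU // subrr.
Qed.

Lemma sqnorm_gram_proj_le x : sqnorm (x *m Q) <= sqnorm x.
Proof.
have Qcsym : (1%:M - Q)^T = 1%:M - Q by rewrite linearB /= trmx1 gram_proj_sym.
have Qcidem : (1%:M - Q) *m (1%:M - Q) = 1%:M - Q.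
  by rewrite mulmxBr mulmx1 mulmxBl mul1mx gram_proj_idem subrr subr0.
rewrite -qform_sym_idem ?gram_proj_sym ?gram_proj_idem // -subr_ge0 -qform1B.
by rewrite qform_sym_idem // sqnorm_ge0.
Qed.

End GramProjection.

Section Blocks.
Variables (R : realType) (n : nat) (P : {set {set 'I_n}}).
Implicit Types (I J : {set 'I_n}) (M : 'M[R]_n) (u v w : 'rV[R]_n).

Definition diag_ind I : 'M[R]_n := diag_mx (\row_i (i \in I)%:R).

Definition bdiag M : 'M[R]_n := \sum_(I in P) diag_ind I *m M *m diag_ind I.

Lemma diag_ind_sym I : (diag_ind I)^T = diag_ind I.
Proof. exact: tr_diag_mx. Qed.

Lemma dotv_diag_ind I u v : dotv (u *m diag_ind I) v = dotv u (v *m diag_ind I).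
Proof. by rewrite !dotv_mx trmx_mul diag_ind_sym mulmxA. Qed.

Lemma bdiag_is_linear : linear bdiag.
Proof.
move=> a M N; rewrite /bdiag scaler_sumr -big_split; apply: eq_bigr => I _.
by rewrite mulmxDr mulmxDl -scalemxAr -scalemxAl.
Qed.

HB.instance Definition _ :=
  GRing.isLinear.Build R 'M[R]_n 'M[R]_n *:%R bdiag bdiag_is_linear.

Lemma qform_bdiag M w : qform (bdiag M) w = \sum_(I in P) qform M (w *m diag_ind I).
Proof.
rewrite /qform /bdiag mulmx_sumr mulmx_suml summxE; apply: eq_bigr => I _.
by rewrite trmx_mul diag_ind_sym !mulmxA.
Qed.

Hypothesis P_part : finset.partition P [set: 'I_n].

Lemma pblock_in i : finset.pblock P i \in P.
Proof.
by apply: finset.pblock_mem; rewrite (finset.cover_partition P_part) inE.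
Qed.

Lemma mem_pblock_self i : i \in finset.pblock P i.
Proof. by rewrite finset.mem_pblock (finset.cover_partition P_part) inE. Qed.

Lemma pblock_eq I i : I \in P -> i \in I -> finset.pblock P i = I.
Proof. by apply: finset.def_pblock; case/and3P: P_part. Qed.

Lemma diag_indM I J : I \in P -> J \in P ->
  diag_ind I *m diag_ind J = if I == J then diag_ind I else 0.
Proof.
move=> IP JP; rewrite mulmx_diag; case: eqP => [<-|IJ].
  by congr diag_mx; apply/rowP => j; rewrite !mxE; case: (j \in I); rewrite ?mulr1 ?mulr0.
apply/matrixP => i j; rewrite !mxE.
case iI: (i \in I); case iJ: (i \in J); rewrite ?mulr0 ?mul0r ?mul0rn //.
by case: IJ; rewrite -(pblock_eq IP iI) (pblock_eq JP iJ).
Qed.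

Lemma diag_ind_idem I : I \in P -> diag_ind I *m diag_ind I = diag_ind I.
Proof. by move=> IP; rewrite diag_indM // eqxx. Qed.

Lemma bdiagE M : bdiag M = \matrix_(i, j) (M i j * (j \in finset.pblock P i)%:R).
Proof.
apply/matrixP => i j; rewrite /bdiag summxE !mxE.
under eq_bigr => I _ do rewrite /diag_ind mul_mx_diag mul_diag_mx !mxE.
rewrite (bigD1 _ (pblock_in i)) /= mem_pblock_self mul1r big1 ?addr0 // => I.
case/andP=> IP IiP; case iI: (i \in I); last by rewrite !mul0r.
by move/eqP: IiP; rewrite (pblock_eq IP iI).
Qed.

Lemma bdiag_block I M i j : I \in P -> i \in I -> j \in I -> bdiag M i j = M i j.
Proof. by move=> IP iI jI; rewrite bdiagE mxE (pblock_eq IP iI) jI mulr1. Qed.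

Lemma bdiag_idem M : bdiag (bdiag M) = bdiag M.
Proof.
apply/matrixP => i j; rewrite !bdiagE !mxE.
by case: (j \in finset.pblock P i); rewrite ?mulr1 ?mulr0.
Qed.

Lemma bdiag_tr M : bdiag M^T = (bdiag M)^T.
Proof.
have pblock_sym i j : (j \in finset.pblock P i) = (i \in finset.pblock P j).
  apply/idP/idP => h.
    by rewrite (pblock_eq (pblock_in i) h) mem_pblock_self.
  by rewrite (pblock_eq (pblock_in j) h) mem_pblock_self.
by apply/matrixP => i j; rewrite !bdiagE !mxE pblock_sym.
Qed.

Lemma bdiag1 : bdiag 1%:M = 1%:M.
Proof.
apply/matrixP => i j; rewrite !bdiagE !mxE.
by case: eqP => [->|_]; rewrite ?mem_pblock_self ?mulr1 ?mul0r.
Qed.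

Lemma bdiag_mulr_ind M J : J \in P ->
  bdiag M *m diag_ind J = diag_ind J *m M *m diag_ind J.
Proof.
move=> JP; rewrite /bdiag mulmx_suml (bigD1 J) //= big1 ?addr0.
  by rewrite -mulmxA diag_indM // eqxx.
by move=> I /andP[IP IJ]; rewrite -mulmxA diag_indM // (negPf IJ) mulmx0.
Qed.

Lemma sqnorm_blocks w : sqnorm w = \sum_(I in P) sqnorm (w *m diag_ind I).
Proof.
rewrite -[LHS]mul1r -qform_scalar -bdiag1 qform_bdiag.
by apply: eq_bigr => I _; rewrite qform_scalar mul1r.
Qed.

End Blocks.

Arguments diag_ind {R n} I.
Arguments diag_indM {R n P} P_part {I J}.
Arguments diag_ind_idem {R n P} P_part {I}.

Section RayleighSup.
Variables (R : realType) (n : nat).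

Definition rayleigh_sup (f : 'rV[R]_n -> R) : R :=
  sup (range (fun y => f y / sqnorm y)).

Lemma rayleigh_supP f K : (forall y, f y <= K * sqnorm y) ->
  [/\ 0 <= rayleigh_sup f, forall y, f y <= rayleigh_sup f * sqnorm y &
      forall k, 0 <= k -> (forall y, f y <= k * sqnorm y) -> rayleigh_sup f <= k].
Proof.
move=> fK.
have ub_of k : 0 <= k -> (forall y, f y <= k * sqnorm y) ->
    ubound (range (fun y => f y / sqnorm y)) k.
  move=> k0 fk _ [y _ <-]; have [y0|y0] := eqVneq (sqnorm y) 0.
    by rewrite y0 invr0 mulr0.
  by rewrite ler_pdivrMr // lt_def y0 sqnorm_ge0.
have has_sup_f : has_sup (range (fun y => f y / sqnorm y)).
  split; first by exists (f 0 / sqnorm (0 : 'rV[R]_n)), 0.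
  exists (Num.max K 0); apply: ub_of; first by rewrite le_max lexx orbT.
  move=> y; apply: le_trans (fK y) _; apply: ler_wpM2r; first exact: sqnorm_ge0.
  by rewrite le_max lexx.
(* the junk value [f 0 / 0 = 0] puts [0] in the range *)
have sup0 : 0 <= rayleigh_sup f.
  apply: (sup_upper_bound has_sup_f); exists 0 => //.
  by rewrite sqnorm0 invr0 mulr0.
rewrite /rayleigh_sup; split=> // [y|k k0 fk]; last first.
  by apply: ge_sup; [case: has_sup_f | exact: ub_of].
have [/eqP|y0] := eqVneq (sqnorm y) 0.
  by rewrite sqnorm_eq0 => /eqP ->; have := fK 0; rewrite sqnorm0 !mulr0.
rewrite -ler_pdivrMr ?lt_def ?y0 ?sqnorm_ge0 //.
by apply: (sup_upper_bound has_sup_f); exists y.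
Qed.

End RayleighSup.

Section Arith.
Variable R : realFieldType.

(* With t = |x_I Q|^2, w = |x_I Q P_I|^2 and N = |x_I|^2: t - w <= t - t^2 / N,
   and t (1 - t / N) increases on [0, N / 2]. *)
Lemma offdiag_arith (mu t w N : R) : 0 <= mu -> mu < 1 / 2 -> 0 <= N ->
  0 <= t -> t <= mu * N -> 0 <= w -> t ^+ 2 <= w * N ->
  t - w <= mu * (1 - mu) * N.
Proof.
move=> mu0 mu2 N0 t0 tN w0 tw.
have [N_eq0|N_gt0] := eqVneq N 0.
  by move: tN; rewrite N_eq0 !mulr0 => tN; lra.
have {}N_gt0 : 0 < N by rewrite lt_def N_gt0.
rewrite -(ler_pM2l N_gt0).
have h1 : 0 <= mu * N - t by lra.
have h2 : 0 <= N - t - mu * N by nra.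
have := mulr_ge0 h1 h2; nra.
Qed.

Lemma ler_max0_div (t s x y : R) : 0 < s -> 0 <= x -> s * x <= y ->
  t * x <= Num.max 0 (t / s) * y.
Proof.
move=> s0 x0 sxy; have y0 : 0 <= y by apply: le_trans sxy; exact: mulr_ge0 (ltW s0) x0.
have [t0|t0] := lerP t 0.
  by apply: le_trans (_ : 0 <= _); [exact: mulr_le0_ge0 | apply: mulr_ge0; rewrite ?le_max ?lexx].
have ts0 : 0 <= t / s by rewrite divr_ge0 // ltW.
have -> : t * x = t / s * (s * x) by rewrite mulrA divfK ?gt_eqF.
by rewrite max_r //; apply: ler_wpM2l.
Qed.

Lemma max0_contraction_eq0 (a b c r : R) : 0 <= a -> 0 <= c -> 0 <= r -> r < 1 ->
  b <= Num.max 0 (c + a * r) -> a <= Num.max 0 (b * r - c) -> a = 0.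
Proof.
move=> a0 c0 r0 r1; rewrite max_r ?addr_ge0 ?mulr_ge0 // => hb.
rewrite le_max => /orP[a_le0|ha]; apply/le_anti; rewrite a0 andbT //.
have : a * (1 - r * r) <= c * (r - 1) by nra.
have : 0 < 1 - r * r by nra.
nra.
Qed.

End Arith.

Section Symmetrization.
Variables (R : numFieldType) (n : nat).
Implicit Types Z : 'M[R]_n.

Definition symmx Z := 2^-1 *: (Z + Z^T).

Lemma symmx_is_linear : linear symmx.
Proof.
move=> a Z W; rewrite /symmx linearP /= addrACA -scalerDr (scalerDr 2^-1).
by rewrite !scalerA (mulrC a).
Qed.

HB.instance Definition _ :=
  GRing.isLinear.Build R 'M[R]_n 'M[R]_n *:%R symmx symmx_is_linear.

Lemma symmx_sym Z : (symmx Z)^T = symmx Z.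
Proof. by rewrite /symmx linearZ /= linearD /= trmxK addrC. Qed.

Lemma symmx_id Z : Z^T = Z -> symmx Z = Z.
Proof.
move=> Zsym; rewrite /symmx Zsym -mulr2n -scaler_nat scalerA.
by rewrite mulVf ?scale1r // pnatr_eq0.
Qed.

End Symmetrization.

Section Compression.
Variables (R : realType) (n : nat) (P : {set {set 'I_n}}).
Hypothesis P_part : finset.partition P [set: 'I_n].
Variables (Q : 'M[R]_n) (mu : R).
Hypotheses (Q_sym : Q^T = Q) (Q_idem : Q *m Q = Q).
Hypotheses (mu_ge0 : 0 <= mu) (mu_lt_half : mu < 1 / 2).
Hypothesis Q_block_le : forall I, I \in P -> forall y : 'rV[R]_n,
  y *m diag_ind I = y -> qform Q y <= mu * sqnorm y.

Local Notation Qc := (1%:M - Q).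
Implicit Types (x y w : 'rV[R]_n) (Z : 'M[R]_n).

Definition compress Z := bdiag P (Qc *m Z *m Qc).

Lemma compress_is_linear : linear compress.
Proof.
move=> a Z W; rewrite /compress (mulmxDr Qc) (mulmxDl (Qc *m (a *: Z))).
by rewrite -scalemxAr -scalemxAl linearP.
Qed.

HB.instance Definition _ :=
  GRing.isLinear.Build R 'M[R]_n 'M[R]_n *:%R compress compress_is_linear.

Lemma Qc_sym : Qc^T = Qc.
Proof. by rewrite linearB /= trmx1 Q_sym. Qed.

Lemma qform_conj_Qc Z w : qform (Qc *m Z *m Qc) w = qform Z (w *m Qc).
Proof. by rewrite -qform_conj Qc_sym. Qed.

Lemma Q_block_le_ind I x : I \in P ->
  qform Q (x *m diag_ind I) <= mu * sqnorm (x *m diag_ind I).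
Proof.
by move=> IP; apply: (Q_block_le IP); rewrite -mulmxA (diag_ind_idem P_part IP).
Qed.

Lemma offdiag_block_le I x : I \in P ->
  \sum_(J in P | J != I) sqnorm (x *m diag_ind I *m Q *m diag_ind J)
    <= mu * (1 - mu) * sqnorm (x *m diag_ind I).
Proof.
move=> IP; set v := x *m diag_ind I.
have vI : v *m diag_ind I = v by rewrite -mulmxA (diag_ind_idem P_part IP).
have split_vQ : sqnorm (v *m Q) = sqnorm (v *m Q *m diag_ind I)
    + \sum_(J in P | J != I) sqnorm (v *m Q *m diag_ind J).
  by rewrite (sqnorm_blocks P_part) (bigD1 I).
have dot_vQ : dotv (v *m Q *m diag_ind I) v = sqnorm (v *m Q).
  by rewrite dotv_diag_ind vI -qformE qform_sym_idem.
rewrite (_ : \sum_(J in P | _) _ = sqnorm (v *m Q) - sqnorm (v *m Q *m diag_ind I)).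
  apply: offdiag_arith; rewrite ?sqnorm_ge0 //.
    by rewrite -qform_sym_idem //; exact: Q_block_le_ind.
  by rewrite -dot_vQ; exact: dotv_sqr_le.
by rewrite split_vQ addrC addKr.
Qed.

Definition offdiag (f : 'rV[R]_n -> R) x : R :=
  \sum_(I in P) \sum_(J in P | J != I) f (x *m diag_ind I *m Q *m diag_ind J).

Lemma offdiagN f x : offdiag (fun w => - f w) x = - offdiag f x.
Proof. by rewrite /offdiag -sumrN; apply: eq_bigr => I _; rewrite -sumrN. Qed.

Lemma offdiag_le f b x : 0 <= b -> (forall w, f w <= b * sqnorm w) ->
  offdiag f x <= b * (mu * (1 - mu)) * sqnorm x.
Proof.
move=> b0 fb; apply: (le_trans (_ : _ <= b * offdiag (@sqnorm R n) x)).
  rewrite /offdiag mulr_sumr; apply: ler_sum => I _.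
  by rewrite mulr_sumr; apply: ler_sum => J _.
rewrite -mulrA; apply: ler_wpM2l => //.
rewrite (sqnorm_blocks P_part x) mulr_sumr; apply: ler_sum => I IP.
exact: offdiag_block_le.
Qed.

Lemma qform_compress_split Z x : bdiag P Z = Z ->
  qform (compress Z) x = qform Z (x *m bdiag P Qc) + offdiag (qform Z) x.
Proof.
move=> Zb.
have qformZ w : qform Z w = \sum_(J in P) qform Z (w *m diag_ind J).
  by rewrite -{1}Zb qform_bdiag.
rewrite qform_bdiag qformZ /offdiag -big_split /=; apply: eq_bigr => I IP.
rewrite qform_conj_Qc qformZ (bigD1 I) //=; congr (_ + _).
  by rewrite -(mulmxA x (bdiag P Qc)) (bdiag_mulr_ind P_part) // !mulmxA.
apply: eq_bigr => J /andP[JP JI].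
have IJ : (I == J) = false by rewrite eq_sym (negPf JI).
rewrite mulmxBr mulmx1 mulmxBl -(mulmxA x (diag_ind I) (diag_ind J)).
by rewrite (diag_indM P_part IP JP) IJ mulmx0 sub0r qformNv.
Qed.

Lemma qform_bdiag_Qc_ge x : (1 - mu) * sqnorm x <= qform (bdiag P Qc) x.
Proof.
rewrite qform_bdiag (sqnorm_blocks P_part x) mulr_sumr; apply: ler_sum => I IP.
by rewrite qform1B mulrBl mul1r lerD2l lerN2 Q_block_le_ind.
Qed.

Lemma bdiag_Qc_solve y :
  exists x, x *m bdiag P Qc = y /\ (1 - mu) ^+ 2 * sqnorm x <= sqnorm y.
Proof.
have mu1 : 0 < 1 - mu by have := mu_lt_half; lra.
have D_unit : bdiag P Qc \in unitmx.
  rewrite -row_free_unit; apply: inj_row_free => v vD.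
  apply/eqP; rewrite -sqnorm_eq0 eq_le sqnorm_ge0 andbT -(pmulr_rle0 _ mu1).
  by have := qform_bdiag_Qc_ge v; rewrite /qform vD mul0mx mxE.
exists (y *m invmx (bdiag P Qc)); set x := y *m _.
have xD : x *m bdiag P Qc = y by rewrite mulmxKV.
split=> //.
have lb := qform_bdiag_Qc_ge x; rewrite qformE xD in lb.
have cs := dotv_sqr_le y x; have x0 := sqnorm_ge0 x.
have [x_eq0|x_neq0] := eqVneq (sqnorm x) 0.
  by rewrite x_eq0 mulr0 sqnorm_ge0.
have x_gt0 : 0 < sqnorm x by rewrite lt_def x_neq0 x0.
have lb0 : 0 <= (1 - mu) * sqnorm x by rewrite mulr_ge0 ?ltW.
have : ((1 - mu) * sqnorm x) ^+ 2 <= dotv y x ^+ 2.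
  by rewrite ler_sqr ?nnegrE // (le_trans lb0).
rewrite -(ler_pM2r x_gt0); nra.
Qed.

Lemma compress_scalar_psd Z c : bdiag P Z = Z -> compress Z = c%:M ->
  0 <= c -> forall y, 0 <= qform Z y.
Proof.
move=> Zb Zc c0; have mu0 := mu_ge0; have mu2 := mu_lt_half.
pose s := (1 - mu) ^+ 2; pose rho := mu * (1 - mu).
have s_gt0 : 0 < s by rewrite exprn_gt0 // subr_gt0; lra.
have rho_ge0 : 0 <= rho by rewrite mulr_ge0 // subr_ge0; lra.
have Z_le y : qform Z y <= (\sum_i \sum_j `|Z i j|) * sqnorm y.
  exact: le_trans (ler_norm _) (abs_qform_le Z y).
have Z_ge y : - qform Z y <= (\sum_i \sum_j `|Z i j|) * sqnorm y.
  by apply: le_trans (abs_qform_le Z y); rewrite -normrN ler_norm.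
have [a_ge0 a_ub a_min] := rayleigh_supP Z_ge.
have [b_ge0 b_ub b_min] := rayleigh_supP Z_le.
set a := rayleigh_sup _ in a_ge0 a_ub a_min.
set b := rayleigh_sup _ in b_ge0 b_ub b_min.
have key y : exists x,
    c * sqnorm x = qform Z y + offdiag (qform Z) x /\ s * sqnorm x <= sqnorm y.
  have [x [xD xy]] := bdiag_Qc_solve y.
  by exists x; rewrite -qform_scalar -Zc qform_compress_split // xD.
have b_le : b <= Num.max 0 ((c + a * rho) / s).
  apply: b_min => [|y]; first by rewrite le_max lexx.
  have [x [e xy]] := key y.
  apply: le_trans (ler_max0_div _ s_gt0 (sqnorm_ge0 x) xy).
  have := offdiag_le x a_ge0 a_ub; rewrite offdiagN -/rho; lra.
have a_le : a <= Num.max 0 ((b * rho - c) / s).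
  apply: a_min => [|y]; first by rewrite le_max lexx.
  have [x [e xy]] := key y.
  apply: le_trans (ler_max0_div _ s_gt0 (sqnorm_ge0 x) xy).
  have := offdiag_le x b_ge0 b_ub; rewrite -/rho; lra.
have a0 : a = 0.
  apply: (@max0_contraction_eq0 _ a b (c / s) (rho / s)).
  - exact: a_ge0.
  - by rewrite divr_ge0 // ltW.
  - by rewrite divr_ge0 // ltW.
  - by rewrite ltr_pdivrMr // mul1r /rho /s expr2; nra.
  - by rewrite addrC mulrA -mulrDl addrC.
  - by rewrite mulrA -mulrBl.
by move=> y; have := a_ub y; rewrite a0 mul0r; lra.
Qed.


Definition bsym Z := bdiag P (symmx Z).

Lemma bsym_is_linear : linear bsym.
Proof. by move=> a Z W; rewrite /bsym !linearP. Qed.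

HB.instance Definition _ :=
  GRing.isLinear.Build R 'M[R]_n 'M[R]_n *:%R bsym bsym_is_linear.

Lemma bsym_sym Z : (bsym Z)^T = bsym Z.
Proof. by rewrite /bsym -(bdiag_tr P_part) symmx_sym. Qed.

Lemma bdiag_bsym Z : bdiag P (bsym Z) = bsym Z.
Proof. exact: (bdiag_idem P_part). Qed.

Lemma bsym_id W : W^T = W -> bdiag P W = W -> bsym W = W.
Proof. by move=> Wsym Wb; rewrite /bsym symmx_id. Qed.

(* Restricted to symmetric block-diagonal matrices this is [compress];
   the summand [Z - bsym Z] extends it to an endomorphism of all matrices that is
   injective as soon as the restriction is. *)
Definition compress_ext Z := Z - bsym Z + compress (bsym Z).

Lemma compress_ext_is_linear : linear compress_ext.
Proof.
move=> a Z W; rewrite /compress_ext !linearP /=.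
move: (bsym Z) (bsym W) (compress (bsym Z)) (compress (bsym W)) => A B C D.
by apply/matrixP => i j; rewrite !mxE; ring.
Qed.

Lemma bsym_compress_ext Z : bsym (compress_ext Z) = compress (bsym Z).
Proof.
have T_sym : (compress (bsym Z))^T = compress (bsym Z).
  by rewrite /compress -(bdiag_tr P_part) !trmx_mul Qc_sym bsym_sym mulmxA.
rewrite /compress_ext linearD linearB /= (bsym_id (bsym_sym Z) (bdiag_bsym Z)).
by rewrite subrr add0r bsym_id // (bdiag_idem P_part).
Qed.

Lemma compress_ext_inj Z : compress_ext Z = 0 -> Z = 0.
Proof.
move=> Z0.
have T0 : compress (bsym Z) = 0%:M by rewrite -bsym_compress_ext Z0 linear0 raddf0.
have ge0 := compress_scalar_psd (bdiag_bsym Z) T0 (lexx 0).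
have le0 : forall y, 0 <= qform (- bsym Z) y.
  apply: (compress_scalar_psd _ _ (lexx 0)); first by rewrite linearN /= bdiag_bsym.
  by rewrite linearN /= T0 raddf0 oppr0.
have bsymZ0 : bsym Z = 0.
  apply: sym_qform_eq0 (bsym_sym Z) _ => y.
  by apply/le_anti; rewrite ge0 andbT -oppr_ge0 -qformN le0.
by move: Z0; rewrite /compress_ext bsymZ0 subr0 linear0 addr0.
Qed.

Lemma bdiag_compress_solvable : exists B : 'M[R]_n,
  [/\ B^T = B, bdiag P B = B & compress B = 1%:M].
Proof.
pose L : {linear 'M[R]_n -> 'M[R]_n} :=
  HB.pack compress_ext (GRing.isLinear.Build _ _ _ _ _ compress_ext_is_linear).
have L_unit : lin_mx L \in unitmx.
  rewrite -row_free_unit; apply: inj_row_free => v vL.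
  have /compress_ext_inj v0 : L (vec_mx v) = 0.
    by apply: (can_inj mxvecK); rewrite -mul_rV_lin vL linear0.
  by rewrite -(vec_mxK v) v0 linear0.
pose Z := vec_mx (mxvec (1%:M : 'M[R]_n) *m invmx (lin_mx L)).
have LZ : compress_ext Z = 1%:M.
  by rewrite -[compress_ext Z]/(L Z) -mx_vec_lin /Z vec_mxK mulmxKV // mxvecK.
exists (bsym Z); split; [exact: bsym_sym | exact: bdiag_bsym |].
rewrite -bsym_compress_ext LZ; apply: bsym_id; [exact: trmx1 | exact: bdiag1].
Qed.

Lemma realizable_of_proj (U : 'M[R]_n) :
  (forall u : 'rV[R]_n, (u <= U)%MS -> u *m Q = u) -> realizable P U.
Proof.
move=> QU; have [B [Bsym Bb BQ]] := bdiag_compress_solvable.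
have B_psd := compress_scalar_psd Bb BQ ler01.
exists (Qc *m B *m Qc); split; first split; first split.
- by rewrite !trmx_mul Bsym Qc_sym mulmxA.
- by move=> x; have := B_psd (x *m Qc); rewrite -qform_conj_Qc.
- by move=> I IP i j iI jI; rewrite -(bdiag_block P_part _ IP iI jI) -/(compress B) BQ mxE.
- move=> u uU; have Qcu : Qc *m u^T = 0.
    by rewrite -Qc_sym -trmx_mul mulmxBr mulmx1 QU // subrr trmx0.
  by rewrite -mulmxA Qcu mulmx0.
Qed.

End Compression.

Lemma qform_gram_le_coherence (R : realType) (n : nat) (P : {set {set 'I_n}})
    (U : 'M[R]_n) I (y : 'rV[R]_n) : I \in P -> y *m diag_ind I = y ->
  qform (gram_proj (row_base U)) y <= Num.max (coherence P U) 0 * sqnorm y.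
Proof.
move=> IP yI; set Q := gram_proj (row_base U).
have orthQ x : orthproj U x = x *m Q := orthproj_gram (row_base_free U) x (eq_row_base U).
have [/eqP|y_neq0] := eqVneq (sqnorm y) 0.
  by rewrite sqnorm_eq0 => /eqP ->; rewrite /qform !mul0mx mxE sqnorm0 mulr0.
have y_gt0 : 0 < sqnorm y by rewrite lt_def y_neq0 sqnorm_ge0.
pose s := Num.sqrt (sqnorm y); pose x := s^-1 *: y.
have s_gt0 : 0 < s by rewrite sqrtr_gt0.
have s2 : s ^+ 2 = sqnorm y by rewrite sqr_sqrtr // ltW.
have y_sx : y = s *: x by rewrite /x scalerA mulfV ?scale1r // gt_eqF.
have x_unit : unit_supp I x.
  split; first by rewrite sqnormZ exprVn s2 mulVf // gt_eqF.
  move=> j jI; rewrite mxE -yI /diag_ind mul_mx_diag !mxE (negPf jI).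
  by rewrite !mulr0.
pose S := [set r : R | exists J : {set 'I_n}, J \in P /\
  exists x : 'rV[R]_n, unit_supp J x /\ r = sqnorm (orthproj U x)]%classic.
have x_in : S (qform Q x).
  exists I; split=> //; exists x; split=> //.
  by rewrite orthQ qform_sym_idem ?gram_proj_sym ?gram_proj_idem ?row_base_free.
have x_le : qform Q x <= coherence P U.
  apply: (@sup_upper_bound _ S _ _ x_in); split; first by exists (qform Q x).
  exists 1 => _ [J [_ [z [[z1 _] ->]]]].
  by rewrite orthQ -z1 sqnorm_gram_proj_le ?row_base_free.
have [x1 _] := x_unit.
rewrite y_sx qformZv sqnormZ x1 mulr1 mulrC; apply: ler_wpM2r; first exact: sqr_ge0.
by apply: le_trans x_le _; rewrite le_max lexx.
Qed.

Theorem corollary5p11 (R : realType) (n : nat) (P : {set {set 'I_n}})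
  (U : 'M[R]_n) :
  finset.partition P [set: 'I_n] ->
  coherence P U < 1 / 2 ->
  realizable P U.
Proof.
move=> P_part coh_lt_half.
pose Q := gram_proj (row_base U); pose mu := Num.max (coherence P U) 0.
have Q_sym : Q^T = Q := gram_proj_sym _.
have Q_idem : Q *m Q = Q := gram_proj_idem (row_base_free U).
have mu_ge0 : 0 <= mu by rewrite le_max lexx orbT.
have mu_lt_half : mu < 1 / 2 by rewrite gt_max coh_lt_half /=; lra.
have Q_fix (u : 'rV[R]_n) : (u <= U)%MS -> u *m Q = u.
  by move=> uU; apply: (gram_proj_fix (row_base_free U)); rewrite eq_row_base.
have Q_block_le I : I \in P -> forall y : 'rV[R]_n,
    y *m diag_ind I = y -> qform Q y <= mu * sqnorm y.
  by move=> IP y; exact: qform_gram_le_coherence.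
exact: (realizable_of_proj P_part Q_sym Q_idem mu_ge0 mu_lt_half Q_block_le Q_fix).
Qed.
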